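(* Let $\mathcal A$ be a $\mathbb Z_2$-graded algebra with a graded differential calculus $(\Omega^\bullet,d)$, $\Omega^0=\mathcal A$, $d^2=0$, satisfying the graded Leibniz rule. Let $\pi:\Omega^1\otimes_{\mathcal A}\Omega^1\to\Omega^2$, $\pi(\xi\otimes\eta)=\xi\wedge\eta$, and $\pi_{12}=\pi\otimes1$. Let $\sigma:\Omega^1\otimes_{\mathcal A}\Omega^1\to\Omega^1\otimes_{\mathcal A}\Omega^1$ be a left $\mathcal A$-linear map with $\pi\circ(\sigma-1)=0$, and let $\sigma_{12}=\sigma\otimes1\otimes\cdots\otimes1$. Let $D$ be a covariant derivative, i.e. linear maps $D:\otimes^n\Omega^1\to\otimes^{n+1}\Omega^1$ (tensor products over $\mathcal A$), satisfying for homogeneous $f\in\mathcal A$, $\xi\in\Omega^1$, $\omega\in\Omega^1$, $\omega'\in\otimes^{n-1}\Omega^1$ and $\Omega\in\otimes^n\Omega^1$: $$D(f\Omega)=df\otimes\Omega+(-1)^{\hat f}fD\Omega,\quad D(\xi f)=(-1)^{\hat\xi}\sigma(\xi\otimes df)+(D\xi)f,\quad D(\omega\otimes\omega')=D\omega\otimes\omega'+(-1)^{\hat\omega}\sigma_{12}(\omega\otimes D\omega').$$ Suppose $D$ is torsionless, i.e. $\Theta:=d-\pi\circ D$ vanishes on $\Omega^1$. Then the curvature $\pi_{12}D^2:\Omega^1\to\Omega^2\otimes_{\mathcal A}\Omega^1$ is left $\mathcal A$-linear: $\pi_{12}D^2(f\xi)=f\,\pi_{12}D^2(\xi)$ for all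 $f\in\mathcal A$, $\xi\in\Omega^1$.
   Context: $\hat f$ denotes the parity of a homogeneous element; the parity of $d f$ is $\hat f+1$ mod 2, and $D$ changes parity by one. *)

From HB Require Import structures.
From mathcomp Require Import all_boot all_order all_algebra.
Set Implicit Arguments. Unset Strict Implicit. Unset Printing Implicit Defensive.
Import GRing.Theory.
Local Open Scope ring_scope.

Definition sgn {V : zmodType} (b : bool) (v : V) : V := if b then - v else v.

Definition additive_fun (U V : zmodType) (f : U -> V) :=
  forall x y, f (x + y) = f x + f y.

Definition klinear (K : fieldType) (U V : lmodType K) (f : U -> V) :=
  additive_fun f /\ forall (k : K) x, f (k *: x) = k *: f x.

(* A Z/2-grading of a K-vector space: V = V_0 (+) V_1;
   homog b v  means  "v is homogeneous of parity b" *)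
Record grading (K : fieldType) (V : lmodType K) := Grading {
  homog : bool -> V -> Prop;
  hom0 : forall b, homog b 0;
  homD : forall b x y, homog b x -> homog b y -> homog b (x + y);
  homZ : forall b (k : K) x, homog b x -> homog b (k *: x);
  hom_decomp : forall v, exists v0 v1, [/\ homog false v0, homog true v1 & v = v0 + v1];
  hom_direct : forall v, homog false v -> homog true v -> v = 0 }.

Record lact (K : fieldType) (A : algType K) (V : lmodType K) := LAct {
  la : A -> V -> V;
  la_addl : forall a b v, la (a + b) v = la a v + la b v;
  la_addr : forall a v w, la a (v + w) = la a v + la a w;
  la1 : forall v, la 1 v = v;
  laM : forall a b v, la (a * b) v = la a (la b v);
  laZl : forall (k : K) a v, la (k *: a) v = k *: la a v;
  laZr : forall (k : K) a v, la a (k *: v) = k *: la a v }.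

Record ract (K : fieldType) (A : algType K) (V : lmodType K) := RAct {
  ra : V -> A -> V;
  ra_addl : forall v w a, ra (v + w) a = ra v a + ra w a;
  ra_addr : forall v a b, ra v (a + b) = ra v a + ra v b;
  ra1 : forall v, ra v 1 = v;
  raM : forall v a b, ra v (a * b) = ra (ra v a) b;
  raZl : forall (k : K) v a, ra (k *: v) a = k *: ra v a;
  raZr : forall (k : K) v a, ra v (k *: a) = k *: ra v a }.

Definition bimod_compat (K : fieldType) (A : algType K) (V : lmodType K)
  (l : lact A V) (r : ract A V) :=
  forall a v b, ra r (la l a v) b = la l a (ra r v b).

Record tensor (K : fieldType) (A : algType K) (M N T : lmodType K)
    (rM : ract A M) (lN : lact A N) := Tensor {
  tp : M -> N -> T;
  tp_addl : forall m m' n, tp (m + m') n = tp m n + tp m' n;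
  tp_addr : forall m n n', tp m (n + n') = tp m n + tp m n';
  tp_Zl : forall (k : K) m n, tp (k *: m) n = k *: tp m n;
  tp_Zr : forall (k : K) m n, tp m (k *: n) = k *: tp m n;
  tp_bal : forall m a n, tp (ra rM m a) n = tp m (la lN a n);
  tp_univ : forall (Z : zmodType) (g : M -> N -> Z),
     (forall m m' n, g (m + m') n = g m n + g m' n) ->
     (forall m n n', g m (n + n') = g m n + g m n') ->
     (forall m a n, g (ra rM m a) n = g m (la lN a n)) ->
     exists h : T -> Z, [/\ additive_fun h, (forall m n, h (tp m n) = g m n) &
        forall h' : T -> Z, additive_fun h' -> (forall m n, h' (tp m n) = g m n) ->
          forall t, h' t = h t] }.

(* A Z/2-graded algebra A with a graded differential calculus, in degrees 0,1,2:
   Omega^0 = A, Omega^1 = O1, Omega^2 = O2, d : A -> O1, d : O1 -> O2,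
   wedge : O1 x O1 -> O2, d^2 = 0, graded Leibniz rule. *)
Record graded_calculus (K : fieldType) (A : algType K) := GradedCalculus {
  gA : grading A;
  gA_1 : homog gA false 1;
  gA_mul : forall b c x y, homog gA b x -> homog gA c y -> homog gA (addb b c) (x * y);
  O1 : lmodType K;
  O2 : lmodType K;
  g1 : grading O1;
  g2 : grading O2;
  l1 : lact A O1;  r1 : ract A O1;  bi1 : bimod_compat l1 r1;
  l2 : lact A O2;  r2 : ract A O2;  bi2 : bimod_compat l2 r2;
  l1_hom : forall b c a v, homog gA b a -> homog g1 c v -> homog g1 (addb b c) (la l1 a v);
  r1_hom : forall b c v a, homog g1 b v -> homog gA c a -> homog g1 (addb b c) (ra r1 v a);
  l2_hom : forall b c a v, homog gA b a -> homog g2 c v -> homog g2 (addb b c) (la l2 a v);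
  r2_hom : forall b c v a, homog g2 b v -> homog gA c a -> homog g2 (addb b c) (ra r2 v a);
  d0 : A -> O1;
  d1 : O1 -> O2;
  d0_lin : klinear d0;
  d1_lin : klinear d1;
  d0_hom : forall b f, homog gA b f -> homog g1 (~~ b) (d0 f);
  d1_hom : forall b x, homog g1 b x -> homog g2 (~~ b) (d1 x);
  wedge : O1 -> O1 -> O2;
  wedge_addl : forall x x' y, wedge (x + x') y = wedge x y + wedge x' y;
  wedge_addr : forall x y y', wedge x (y + y') = wedge x y + wedge x y';
  wedge_Zl : forall (k : K) x y, wedge (k *: x) y = k *: wedge x y;
  wedge_Zr : forall (k : K) x y, wedge x (k *: y) = k *: wedge x y;
  wedge_bal : forall x a y, wedge (ra r1 x a) y = wedge x (la l1 a y);
  wedge_l : forall a x y, wedge (la l1 a x) y = la l2 a (wedge x y);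
  wedge_r : forall x y a, wedge x (ra r1 y a) = ra r2 (wedge x y) a;
  wedge_hom : forall b c x y, homog g1 b x -> homog g1 c y -> homog g2 (addb b c) (wedge x y);
  dd0 : forall f, d1 (d0 f) = 0;
  leib0 : forall b f g, homog gA b f ->
     d0 (f * g) = ra r1 (d0 f) g + sgn b (la l1 f (d0 g));
  leib1l : forall b f x, homog gA b f ->
     d1 (la l1 f x) = wedge (d0 f) x + sgn b (la l2 f (d1 x));
  leib1r : forall b x f, homog g1 b x ->
     d1 (ra r1 x f) = ra r2 (d1 x) f + sgn b (wedge x (d0 f)) }.

(* The tensor powers over A needed:  T2 = O1 (x)_A O1,
   T3 = T2 (x)_A O1 (= O1 (x)_A T2 via t12, associativity),  W = O2 (x)_A O1,
   with the induced left (and, on T2, right) A-actions. *)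
Record tensor_setting (K : fieldType) (A : algType K) (C : graded_calculus A) :=
  TensorSetting {
  T2 : lmodType K;
  T3 : lmodType K;
  W : lmodType K;
  lT2 : lact A T2;  rT2 : ract A T2;  biT2 : bimod_compat lT2 rT2;
  lT3 : lact A T3;
  lW : lact A W;
  t11 : tensor T2 (r1 C) (l1 C);
  t21 : tensor T3 rT2 (l1 C);
  tw : tensor W (r2 C) (l1 C);
  lT2_tp : forall a x y, la lT2 a (tp t11 x y) = tp t11 (la (l1 C) a x) y;
  rT2_tp : forall x y a, ra rT2 (tp t11 x y) a = tp t11 x (ra (r1 C) y a);
  lT3_tp : forall a x y, la lT3 a (tp t21 x y) = tp t21 (la lT2 a x) y;
  lW_tp : forall a x y, la lW a (tp tw x y) = tp tw (la (l2 C) a x) y;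
  t12 : O1 C -> T2 -> T3;
  t12_addl : forall x x' y, t12 (x + x') y = t12 x y + t12 x' y;
  t12_addr : forall x y y', t12 x (y + y') = t12 x y + t12 x y';
  t12_assoc : forall x y z, t12 x (tp t11 y z) = tp t21 (tp t11 x y) z }.

Arguments wedge {K A} g0 _ _.
Arguments d1 {K A} g0 _.
Arguments t12 {K A C} t _ _.

From HB Require Import structures.
From mathcomp Require Import all_boot all_order all_algebra.
Set Implicit Arguments. Unset Strict Implicit. Unset Printing Implicit Defensive.
Import GRing.Theory.
Local Open Scope ring_scope.

(* Both sides of the claim are additive in f, so it suffices to take f homogeneous
   of parity b. Expanding D^2 (f xi) with the three Leibniz rules gives
     D (df) (x) xi  -  (-1)^b sigma12 (df (x) D xi)  +  (-1)^b df (x) D xi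
       +  f D^2 xi.
   Torsion freeness turns pi (D (df)) into d (df) = 0, and pi o sigma = pi makes
   pi12 o sigma12 = pi12, so after applying pi12 the two middle terms cancel. *)

Lemma additive_fun0 (U V : zmodType) (f : U -> V) : additive_fun f -> f 0 = 0.
Proof. by move=> fD; apply: (addIr (f 0)); rewrite -fD !add0r. Qed.

Lemma additive_funN (U V : zmodType) (f : U -> V) :
  additive_fun f -> forall x, f (- x) = - f x.
Proof.
by move=> fD x; apply/eqP; rewrite -addr_eq0 -fD addNr (additive_fun0 fD).
Qed.

Lemma additive_funB (U V : zmodType) (f : U -> V) :
  additive_fun f -> forall x y, f (x - y) = f x - f y.
Proof. by move=> fD x y; rewrite fD (additive_funN fD). Qed.

Lemma sgnD (V : zmodType) b (x y : V) : sgn b (x + y) = sgn b x + sgn b y.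
Proof. by case: b; rewrite /= ?opprD. Qed.

Lemma sgnK (V : zmodType) b (x : V) : sgn b (sgn b x) = x.
Proof. by case: b; rewrite /= ?opprK. Qed.

Lemma sgn_negb (V : zmodType) b (x : V) : sgn (~~ b) x = - sgn b x.
Proof. by case: b; rewrite /= ?opprK. Qed.

Lemma additive_fun_sgn (U V : zmodType) (f : U -> V) :
  additive_fun f -> forall b x, f (sgn b x) = sgn b (f x).
Proof. by move=> fD [] x //=; rewrite (additive_funN fD). Qed.

Lemma tensor_ext (K : fieldType) (A : algType K) (M N T : lmodType K)
    (rM : ract A M) (lN : lact A N) (t : tensor T rM lN) (Z : zmodType)
    (h1 h2 : T -> Z) :
  additive_fun h1 -> additive_fun h2 ->
  (forall m n, h1 (tp t m n) = h2 (tp t m n)) -> forall x, h1 x = h2 x.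
Proof.
move=> h1D h2D h12 x.
have [h [_ _ h_uniq]] := tp_univ t (g := fun m n => h1 (tp t m n))
  (ltac:(by move=> m m' n /=; rewrite tp_addl h1D))
  (ltac:(by move=> m n n' /=; rewrite tp_addr h1D))
  (ltac:(by move=> m a n /=; rewrite tp_bal)).
by rewrite (h_uniq h1) // (h_uniq h2).
Qed.

Lemma grading_ext (K : fieldType) (V : lmodType K) (g : grading V) (Z : zmodType)
    (F G : V -> Z) :
  additive_fun F -> additive_fun G ->
  (forall b v, homog g b v -> F v = G v) -> forall v, F v = G v.
Proof.
move=> FD GD FG v; have [v0 [v1 [hv0 hv1 ->]]] := hom_decomp g v.
by rewrite FD GD (FG _ _ hv0) (FG _ _ hv1).
Qed.

Section Curvature.

Variables (K : fieldType) (A : algType K) (C : graded_calculus A).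
Variable S : tensor_setting C.
Variables (sigma : T2 S -> T2 S) (pi : T2 S -> O2 C).
Variables (sigma12 : T3 S -> T3 S) (pi12 : T3 S -> W S).
Variables (D1 : O1 C -> T2 S) (D2 : T2 S -> T3 S).

Hypothesis piL : klinear pi.
Hypothesis pi_tp : forall x y, pi (tp (t11 S) x y) = wedge C x y.
Hypothesis pi_sigma : forall x, pi (sigma x - x) = 0.
Hypothesis sigma12L : klinear sigma12.
Hypothesis sigma12_tp : forall x y, sigma12 (tp (t21 S) x y) = tp (t21 S) (sigma x) y.
Hypothesis pi12L : klinear pi12.
Hypothesis pi12_tp : forall x y, pi12 (tp (t21 S) x y) = tp (tw S) (pi x) y.
Hypothesis D2L : klinear D2.
Hypothesis D1_lact : forall b f w, homog (gA C) b f ->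
  D1 (la (l1 C) f w) = tp (t11 S) (d0 C f) w + sgn b (la (lT2 S) f (D1 w)).
Hypothesis D2_lact : forall b f w, homog (gA C) b f ->
  D2 (la (lT2 S) f w) = t12 S (d0 C f) w + sgn b (la (lT3 S) f (D2 w)).
Hypothesis D2_tp : forall b w w', homog (g1 C) b w ->
  D2 (tp (t11 S) w w') = tp (t21 S) (D1 w) w' + sgn b (sigma12 (t12 S w (D1 w'))).
Hypothesis torsion_free : forall xi, d1 C xi - pi (D1 xi) = 0.

Definition curvature (xi : O1 C) : W S := pi12 (D2 (D1 xi)).

Lemma pi_D1 x : pi (D1 x) = d1 C x.
Proof. by apply/eqP; rewrite eq_sym -subr_eq0 torsion_free. Qed.

Lemma pi_lact a m : pi (la (lT2 S) a m) = la (l2 C) a (pi m).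
Proof.
move: m; apply: (tensor_ext (t := t11 S)).
- by move=> x y; rewrite la_addr (proj1 piL).
- by move=> x y; rewrite (proj1 piL) la_addr.
by move=> x y; rewrite lT2_tp !pi_tp wedge_l.
Qed.

Lemma pi12_lact a m : pi12 (la (lT3 S) a m) = la (lW S) a (pi12 m).
Proof.
move: m; apply: (tensor_ext (t := t21 S)).
- by move=> x y; rewrite la_addr (proj1 pi12L).
- by move=> x y; rewrite (proj1 pi12L) la_addr.
by move=> x y; rewrite lT3_tp !pi12_tp lW_tp pi_lact.
Qed.

Lemma pi12_sigma12 y : pi12 (sigma12 y) = pi12 y.
Proof.
move: y; apply: (tensor_ext (t := t21 S)).
- by move=> x y; rewrite (proj1 sigma12L) (proj1 pi12L).
- exact: (proj1 pi12L).
move=> x y; rewrite sigma12_tp !pi12_tp; congr (tp _ _ _).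
by apply/eqP; rewrite -subr_eq0 -(additive_funB (proj1 piL)) pi_sigma.
Qed.

Lemma pi12_D2_tp_d0 b f w : homog (gA C) b f ->
  pi12 (D2 (tp (t11 S) (d0 C f) w)) =
    sgn (~~ b) (pi12 (t12 S (d0 C f) (D1 w))).
Proof.
move=> hf; rewrite (D2_tp _ (d0_hom hf)) (proj1 pi12L) pi12_tp pi_D1 dd0.
have tw0 : tp (tw S) 0 w = 0 by apply: (additive_fun0 (f := tp (tw S) ^~ w)) => x y; apply: tp_addl.
by rewrite tw0 add0r (additive_fun_sgn (proj1 pi12L)) pi12_sigma12.
Qed.

Lemma curvature_lact_homog b f xi : homog (gA C) b f ->
  curvature (la (l1 C) f xi) = la (lW S) f (curvature xi).
Proof.
move=> hf; have pi12D := proj1 pi12L; have D2D := proj1 D2L.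
rewrite /curvature (D1_lact _ hf) D2D pi12D (pi12_D2_tp_d0 _ hf).
rewrite (additive_fun_sgn D2D) (additive_fun_sgn pi12D) (D2_lact _ hf).
rewrite pi12D sgnD (additive_fun_sgn pi12D) sgnK pi12_lact.
by rewrite addrA sgn_negb addNr add0r.
Qed.

End Curvature.

Theorem mainTheorem2 (K : fieldType) (A : algType K) (C : graded_calculus A)
  (S : tensor_setting C)
  (sigma : T2 S -> T2 S) (pi : T2 S -> O2 C)
  (sigma12 : T3 S -> T3 S) (pi12 : T3 S -> W S)
  (D1 : O1 C -> T2 S) (D2 : T2 S -> T3 S) :
  (* pi : O1 (x) O1 -> O2,  pi (xi (x) eta) = xi /\ eta *)
  klinear pi ->
  (forall x y, pi (tp (t11 S) x y) = wedge C x y) ->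
  (* sigma left A-linear with pi o (sigma - 1) = 0 *)
  klinear sigma ->
  (forall a x, sigma (la (lT2 S) a x) = la (lT2 S) a (sigma x)) ->
  (forall x, pi (sigma x - x) = 0) ->
  (* sigma12 = sigma (x) 1 on T3 = T2 (x) O1 *)
  klinear sigma12 ->
  (forall x y, sigma12 (tp (t21 S) x y) = tp (t21 S) (sigma x) y) ->
  (* pi12 = pi (x) 1 : T3 -> O2 (x) O1 *)
  klinear pi12 ->
  (forall x y, pi12 (tp (t21 S) x y) = tp (tw S) (pi x) y) ->
  (* D : (x)^n O1 -> (x)^(n+1) O1 for n = 1, 2 *)
  klinear D1 -> klinear D2 ->
  (* D (f Omega) = df (x) Omega + (-1)^f f D Omega,  Omega in O1 *)
  (forall b f w, homog (gA C) b f ->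
     D1 (la (l1 C) f w) = tp (t11 S) (d0 C f) w + sgn b (la (lT2 S) f (D1 w))) ->
  (* same, Omega in O1 (x) O1 *)
  (forall b f w, homog (gA C) b f ->
     D2 (la (lT2 S) f w) = t12 S (d0 C f) w + sgn b (la (lT3 S) f (D2 w))) ->
  (* D (xi f) = (-1)^xi sigma (xi (x) df) + (D xi) f *)
  (forall b c x f, homog (g1 C) b x -> homog (gA C) c f ->
     D1 (ra (r1 C) x f) = sgn b (sigma (tp (t11 S) x (d0 C f))) + ra (rT2 S) (D1 x) f) ->
  (* D (w (x) w') = D w (x) w' + (-1)^w sigma12 (w (x) D w') *)
  (forall b w w', homog (g1 C) b w ->
     D2 (tp (t11 S) w w') =
       tp (t21 S) (D1 w) w' + sgn b (sigma12 (t12 S w (D1 w')))) ->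
  (* torsionless: Theta = d - pi o D vanishes on O1 *)
  (forall xi, d1 C xi - pi (D1 xi) = 0) ->
  (* curvature pi12 D^2 is left A-linear *)
  forall f xi, pi12 (D2 (D1 (la (l1 C) f xi))) = la (lW S) f (pi12 (D2 (D1 xi))).
Proof.
move=> piL pi_tp _ _ pi_sigma s12L s12_tp p12L p12_tp D1L D2L D1_la D2_la _ D2_tp
  tors f xi.
move: f; apply: (grading_ext (g := gA C)) => [g h | g h | b g hg].
- by rewrite la_addl (proj1 D1L) (proj1 D2L) (proj1 p12L).
- exact: la_addl.
exact: (curvature_lact_homog piL pi_tp pi_sigma s12L s12_tp p12L p12_tp D2L
  D1_la D2_la D2_tp tors xi hg).
Qed.
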